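(* Let $d\ge3$, let $\lambda$ be real, and let $\sigma$ be a Hermitian operator on $\mathbb{C}^d\otimes\mathbb{C}^d$ whose partial transpose is $\sigma^{PT}=\lambda I-(\lambda+1)|\Phi_0\rangle\langle\Phi_0|$, where $|\Phi_0\rangle=\frac{1}{\sqrt d}\sum_{j=0}^{d-1}|jj\rangle$. Then: (1) if $\lambda\ge 2/(d-2)$, then $\langle v|\sigma^{PT}|v\rangle\ge0$ for every vector $|v\rangle$ of Schmidt rank two (i.e. $\sigma$ is pseudo one-copy undistillable); (2) if $\lambda<2/(d-2)$, then there exists a vector $|v\rangle$ of Schmidt rank two with $\langle v|\sigma^{PT}|v\rangle<0$.
   Context: The partial transpose on the second factor is $\langle ij|X^{PT}|kl\rangle=\langle il|X|kj\rangle$. A (possibly unnormalized) state $\sigma$ is called pseudo one-copy undistillable if $\langle\phi|\sigma^{PT}|\phi\rangle\ge0$ for all vectors $|\phi\rangle$ of Schmidt rank two. *)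

From HB Require Import structures.
From mathcomp Require Import all_boot all_order all_algebra.
From mathcomp Require Import reals complex.
Set Implicit Arguments. Unset Strict Implicit. Unset Printing Implicit Defensive.
Import Order.TTheory GRing.Theory Num.Theory.
Local Open Scope ring_scope.

Section Defs.
Variable C : numClosedFieldType.
Variable d : nat.

(* Basis of C^d (x) C^d: index a : 'I_(d*d) corresponds to |i j>, via
   mathcomp's mxvec_index i j (its inverse is tidx). *)
Definition tidx (a : 'I_(d * d)) : 'I_d * 'I_d :=
  enum_val (cast_ord (esym (@mxvec_cast d d)) a).

(* Partial transpose on the second factor: <ij|X^PT|kl> = <il|X|kj>. *)
Definition ptrans (X : 'M[C]_(d * d)) : 'M[C]_(d * d) :=
  \matrix_(a, b) X (mxvec_index (tidx a).1 (tidx b).2)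
                   (mxvec_index (tidx b).1 (tidx a).2).

Definition adj {m n} (A : 'M[C]_(m, n)) : 'M[C]_(n, m) := map_mx Num.conj A^T.

Definition hermitian_op (X : 'M[C]_(d * d)) : Prop := adj X = X.

(* The ket of the vector sum_{ij} V i j |ij>, given its d x d coefficient
   matrix V; its Schmidt rank is \rank V. *)
Definition ket (V : 'M[C]_d) : 'cV[C]_(d * d) := (mxvec V)^T.

Definition schmidt_rank (V : 'M[C]_d) : nat := \rank V.

Definition expval (X : 'M[C]_(d * d)) (V : 'M[C]_d) : C :=
  (adj (ket V) *m X *m ket V) 0 0.

Definition Phi0 : 'cV[C]_(d * d) :=
  \col_a (if (tidx a).1 == (tidx a).2 then (sqrtC d%:R)^-1 else 0).

End Defs.

From HB Require Import structures.
From mathcomp Require Import all_boot all_order all_algebra.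
From mathcomp Require Import reals complex ring lra.
Import Order.TTheory GRing.Theory Num.Theory.
Set Implicit Arguments. Unset Strict Implicit. Unset Printing Implicit Defensive.
Local Open Scope ring_scope.

(* Writing |v> = sum_ij V_ij |ij>, one has <v|v> = tr (V V^* ) and
   <Phi0|v> = tr V / sqrt d, so <v|sigma^PT|v> = lam tr (V V^* ) - (lam + 1) |tr V|^2 / d.
   If P is the orthogonal projector onto the row space of V, then tr V = tr (V P), and
   Cauchy-Schwarz gives |tr V|^2 <= rank V * tr (V V^* ), with equality for
   V = diag (1, 1, 0, ..., 0).  Over Schmidt rank two vectors the expectation is
   therefore nonnegative iff 2 (lam + 1) <= lam d, i.e. iff lam >= 2 / (d - 2). *)

Lemma mxtrace_pid_mx (R : pzRingType) n r : (r <= n)%N -> \tr (pid_mx r : 'M[R]_n) = r%:R.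
Proof.
move=> le_rn; rewrite /mxtrace (eq_bigr (fun i : 'I_n => if (i < r)%N then 1 else 0)) => [|i _].
  by rewrite -big_mkcond /= -(big_ord_widen _ (fun=> 1)) // sumr_const card_ord.
by rewrite mxE eqxx; case: ltnP.
Qed.

Lemma mxvec_mul_tr (R : pzRingType) m n (A B : 'M[R]_(m, n)) :
  (mxvec A *m (mxvec B)^T) 0 0 = \tr (A *m B^T).
Proof.
rewrite /mxtrace (eq_bigr (fun i => \sum_j A i j * B i j)) => [|i _]; last first.
  by rewrite mxE; apply: eq_bigr => j _; rewrite mxE.
rewrite pair_big mxE (reindex _ (curry_mxvec_bij _ _)) /=.
by apply: eq_bigr => -[i j] _; rewrite mxE !mxvecE.
Qed.

Section Adjoint.
Variable C : numClosedFieldType.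

Lemma adjK m n (A : 'M[C]_(m, n)) : adj (adj A) = A.
Proof. by apply/matrixP => i j; rewrite !mxE conjCK. Qed.

Lemma adjM m n p (A : 'M[C]_(m, n)) (B : 'M[C]_(n, p)) : adj (A *m B) = adj B *m adj A.
Proof. by rewrite /adj trmx_mul map_mxM. Qed.

Lemma adjZ m n (c : C) (A : 'M[C]_(m, n)) : adj (c *: A) = c^* *: adj A.
Proof. by apply/matrixP => i j; rewrite !mxE rmorphM. Qed.

Lemma adj1 n : adj (1%:M : 'M[C]_n) = 1%:M.
Proof. by rewrite /adj tr_scalar_mx map_scalar_mx rmorph1. Qed.

Lemma mxtrace_adj n (A : 'M[C]_n) : \tr (adj A) = (\tr A)^*.
Proof. by rewrite /adj trace_map_mx mxtrace_tr. Qed.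

Lemma mxtrace_mul_adj_ge0 m n (A : 'M[C]_(m, n)) : 0 <= \tr (A *m adj A).
Proof.
apply: sumr_ge0 => i _; rewrite mxE; apply: sumr_ge0 => j _.
by rewrite !mxE mul_conjC_ge0.
Qed.

Lemma row_space_projector m n (V : 'M[C]_(m, n)) :
  exists P : 'M[C]_n, [/\ adj P = P, P *m P = P, \tr P = (\rank V)%:R & V *m P = V].
Proof.
set Q := schmidt (row_base V).
have Q_isometry : Q *m adj Q = 1%:M.
  by apply/eqP; exact: schmidt_unitarymx (rank_leq_col V).
have sVQ : (V <= Q)%MS.
  by rewrite (eqmx_schmidt_free (row_base_free V)) eq_row_base.
exists (adj Q *m Q); split.
- by rewrite adjM adjK.
- by rewrite mulmxA -(mulmxA (adj Q)) Q_isometry mulmx1.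
- by rewrite mxtrace_mulC Q_isometry mxtrace1.
- by rewrite -{1}(mulmxKpV sVQ) mulmxA -(mulmxA _ Q) Q_isometry mulmx1 mulmxKpV.
Qed.

Lemma mxtrace_sqr_le_projector n (V P : 'M[C]_n) :
  adj P = P -> P *m P = P -> V *m P = V -> 0 < \tr P ->
  \tr V * (\tr V)^* <= \tr P * \tr (V *m adj V).
Proof.
move=> adjP idemP VP trP_gt0; set r := \tr P; set t := \tr V.
have r_real : r^* = r by rewrite -mxtrace_adj adjP.
have PadjV : P *m adj V = adj V by rewrite -{1}adjP -adjM VP.
have adjW : adj (r *: V - t *: P) = r *: adj V - t^* *: P.
  by rewrite -{2}adjP -{2}r_real; apply/matrixP => i j; rewrite !mxE rmorphB !rmorphM.
have := mxtrace_mul_adj_ge0 (r *: V - t *: P).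
rewrite adjW mulmxBl !mulmxBr -!scalemxAl -!scalemxAr VP PadjV idemP.
rewrite !raddfB /= !mxtraceZ mxtrace_adj -/r -/t.
move=> normW_ge0; rewrite -subr_ge0 -(pmulr_rge0 _ trP_gt0).
by apply: le_trans normW_ge0 _; rewrite le_eqVlt; apply/predU1P; left; ring.
Qed.

Lemma mxtrace_sqr_le_rank n (V : 'M[C]_n) :
  \tr V * (\tr V)^* <= (\rank V)%:R * \tr (V *m adj V).
Proof.
have [/eqP | rV_gt0] := posnP (\rank V).
  by rewrite mxrank_eq0 => /eqP ->; rewrite linear0 mul0r mul0mx linear0 mulr0.
have [P [adjP idemP trP VP]] := row_space_projector V.
by have := mxtrace_sqr_le_projector adjP idemP VP; rewrite trP ltr0n; apply.
Qed.
End Adjoint.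

Section IsotropicExpectation.
Variables (C : numClosedFieldType) (d : nat).

Lemma tidxE (i j : 'I_d) : tidx (mxvec_index i j) = (i, j).
Proof. by rewrite /tidx /mxvec_index cast_ordK enum_rankK. Qed.

Lemma ket_dot (V W : 'M[C]_d) : (adj (ket V) *m ket W) 0 0 = \tr (W *m adj V).
Proof.
by rewrite /adj /ket trmxK map_mxvec mxvec_mul_tr -mxtrace_tr trmx_mul trmxK map_trmx.
Qed.

Lemma Phi0E : Phi0 C d = (sqrtC d%:R)^-1 *: ket 1%:M.
Proof.
apply/colP => a; case/mxvec_indexP: a => i j.
by rewrite !mxE mxvecE tidxE !mxE; case: eqP; rewrite ?mulr1 ?mulr0.
Qed.

Lemma expval_isotropic (a b : C) (V : 'M[C]_d) :
  expval (a%:M - b *: (Phi0 C d *m adj (Phi0 C d))) V =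
  a * \tr (V *m adj V) - b * (\tr V * (\tr V)^* / d%:R).
Proof.
rewrite /expval.
set c := (sqrtC (d%:R : C))^-1.
have c_real : c^* = c by rewrite geC0_conj // invr_ge0 sqrtC_ge0 ler0n.
have c_sqr : c * c = d%:R^-1 by rewrite -invfM -expr2 sqrtCK.
set k := ket V; set Phi := Phi0 C d.
have ket_Phi0 : (adj k *m Phi) 0 0 = c * (\tr V)^*.
  by rewrite /Phi Phi0E -scalemxAr mxE ket_dot mul1mx mxtrace_adj.
have Phi0_ket : (adj Phi *m k) 0 0 = c * \tr V.
  by rewrite /Phi Phi0E adjZ -/c c_real -scalemxAl mxE ket_dot adj1 mulmx1.
have -> : adj k *m (a%:M - b *: (Phi *m adj Phi)) *m k =
          a *: (adj k *m k) - b *: ((adj k *m Phi) *m (adj Phi *m k)).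
  by rewrite mulmxBr mulmxBl mul_mx_scalar -scalemxAr -scalemxAl !mulmxA -scalemxAl.
rewrite [adj k *m Phi]mx11_scalar [adj Phi *m k]mx11_scalar [adj k *m k]mx11_scalar.
rewrite ket_Phi0 Phi0_ket ket_dot -scalar_mxM !mxE /= !mulr1n -c_sqr.
by ring.
Qed.

Lemma expval_isotropic_ge0 (a b : C) (V : 'M[C]_d) : (0 < d)%N ->
  0 <= b -> (\rank V)%:R * b <= a * d%:R ->
  0 <= expval (a%:M - b *: (Phi0 C d *m adj (Phi0 C d))) V.
Proof.
move=> d_gt0 b_ge0 ab_le; rewrite expval_isotropic subr_ge0.
set N := \tr (V *m adj V); have N_ge0 : 0 <= N := mxtrace_mul_adj_ge0 V.
have dC_gt0 : (0 : C) < d%:R by rewrite ltr0n.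
apply: le_trans (_ : b * ((\rank V)%:R * N / d%:R) <= _).
  by rewrite ler_wpM2l // ler_wpM2r ?invr_ge0 ?ler0n ?mxtrace_sqr_le_rank.
rewrite (_ : b * _ = (\rank V)%:R * b / d%:R * N); last by ring.
by rewrite ler_wpM2r // ler_pdivrMr.
Qed.

Lemma expval_isotropic_pid_lt0 (a b : C) r : (0 < r <= d)%N ->
  a * d%:R < r%:R * b ->
  expval (a%:M - b *: (Phi0 C d *m adj (Phi0 C d))) (pid_mx r) < 0.
Proof.
move=> /andP[r_gt0 r_le_d] ab_lt.
have adj_pid : adj (pid_mx r : 'M[C]_d) = pid_mx r by rewrite /adj tr_pid_mx map_pid_mx.
rewrite expval_isotropic adj_pid pid_mx_id // mxtrace_pid_mx // conjC_nat.
have d_neq0 : (d%:R : C) != 0 by rewrite pnatr_eq0 -lt0n (leq_trans r_gt0).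
rewrite (_ : _ - _ = r%:R / d%:R * (a * d%:R - r%:R * b)); last by field.
by rewrite pmulr_rlt0 ?subr_lt0 // divr_gt0 ?ltr0n // (leq_trans r_gt0).
Qed.
End IsotropicExpectation.

Local Open Scope complex_scope.

Theorem theorem2 (R : realType) (d : nat) (lam : R) (sigma : 'M[R[i]]_(d * d)) :
  (3 <= d)%N ->
  hermitian_op sigma ->
  ptrans sigma = (lam%:C)%:M - (lam%:C + 1) *: (Phi0 R[i] d *m adj (Phi0 R[i] d)) ->
  ((2 / (d%:R - 2) <= lam ->
     forall V : 'M[R[i]]_d, schmidt_rank V = 2%N -> 0 <= expval (ptrans sigma) V) /\
   (lam < 2 / (d%:R - 2) ->
     exists V : 'M[R[i]]_d, schmidt_rank V = 2%N /\ expval (ptrans sigma) V < 0)).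
Proof.
move=> d_ge3 _ ->.
have d_gt2 : (2 : R) < d%:R by rewrite ltr_nat.
have natC k : (k%:R : R[i]) = (k%:R)%:C by rewrite rmorph_nat.
have lamC1 : lam%:C + 1 = (lam + 1)%:C by rewrite rmorphD rmorph1.
rewrite lamC1; split=> [lam_ge V rankV | lam_lt].
- have lam_gt0 : 0 < lam by apply: lt_le_trans lam_ge; rewrite divr_gt0 ?subr_gt0.
  have lam_d : 2 * (lam + 1) <= lam * d%:R.
    by move: lam_ge; rewrite ler_pdivrMr ?subr_gt0 //; lra.
  apply: expval_isotropic_ge0; first exact: ltnW (ltnW d_ge3).
    by rewrite lecR; lra.
  by rewrite [\rank V]rankV !natC -!rmorphM lecR.
- have lam_d : lam * d%:R < 2 * (lam + 1).
    by move: lam_lt; rewrite ltr_pdivlMr ?subr_gt0 //; lra.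
  exists (pid_mx 2); split; first by rewrite /schmidt_rank rank_pid_mx // ltnW.
  apply: expval_isotropic_pid_lt0; first exact: ltnW d_ge3.
  by rewrite !natC -!rmorphM ltcR.
Qed.
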